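(* Let $u\geqslant1$ and $b\geqslant 8u+24$ be integers. There exists a set $\mathfrak{A}$ of $u$ integer $3\times3$ matrices such that the multiset of absolute values of all entries of all matrices in $\mathfrak{A}$ is exactly the set $$[9,2u+7]_2\cup[10,4u+6]_4\cup[2u+17,6u+15]_2\cup[6u+25,8u+23]_2\cup[b,b+u-1]\cup[b+u+8,b+2u+7]\cup[b+5u+16,b+6u+15]\cup[b+8u+32,b+9u+31]$$ (each element occurring once), and $\sigma_r(A)=\sigma_c(A)=(0,0,0)$ for every $A\in\mathfrak{A}$.
   Context: For integers $a\equiv b\pmod d$ with $d\geqslant1$, $[a,b]_d=\{a+id: 0\leqslant i\leqslant (b-a)/d\}$ if $a\leqslant b$ and $[a,b]_d=\varnothing$ if $a>b$; $[a,b]=[a,b]_1$. For a matrix $A$, $\sigma_r(A)$ is the sequence of its row sums and $\sigma_c(A)$ the sequence of its column sums. *)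

From mathcomp Require Import all_boot all_order all_algebra.
Set Implicit Arguments. Unset Strict Implicit. Unset Printing Implicit Defensive.
Import GRing.Theory Num.Theory.

Definition ivl (a b d : nat) : seq nat :=
  if a <= b then [seq a + i * d | i <- iota 0 ((b - a) %/ d).+1] else [::].

Definition target (u b : nat) : seq nat :=
  ivl 9 (2*u+7) 2 ++ ivl 10 (4*u+6) 4 ++ ivl (2*u+17) (6*u+15) 2
  ++ ivl (6*u+25) (8*u+23) 2 ++ ivl b (b+u-1) 1 ++ ivl (b+u+8) (b+2*u+7) 1
  ++ ivl (b+5*u+16) (b+6*u+15) 1 ++ ivl (b+8*u+32) (b+9*u+31) 1.

Definition abs_entries (u : nat) (A : 'I_u -> 'M[int]_3) : seq nat :=
  [seq n <- [seq absz (A k ij.1 ij.2) | k <- enum 'I_u, ij <- enum {: 'I_3 * 'I_3}]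
   | n != 0%N].

Definition zero_sums (A : 'M[int]_3) : Prop :=
  (forall i : 'I_3, (\sum_(j < 3) A i j)%R = 0%R) /\ (forall j : 'I_3, (\sum_(i < 3) A i j)%R = 0%R).

From mathcomp Require Import all_boot all_order all_algebra.
From mathcomp Require Import zify.
Import GRing.Theory Num.Theory.

(* The matrices are A_k = [[ b+k, -(b+2u+7-k), 2u+7-2k ], [ -(b+6u+15-k), b+8u+32+k, -(2u+17+2k) ],
   [ 6u+15-2k, -(6u+25+2k), 4k+10 ]] for 0 <= k < u. Each row and column sums to zero identically
   in k, and as k varies every entry position runs through an arithmetic progression; the nine
   progressions tile the target set (the third interval is covered by positions (1,2) and (2,0)).
   Since the target has 9u distinct elements and the family has 9u entries, covering it suffices. *)

Lemma uniq_perm_min_size (T : eqType) (s1 s2 : seq T) :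
  uniq s1 -> {subset s1 <= s2} -> (size s2 <= size s1)%N -> perm_eq s1 s2.
Proof.
move=> s1_uniq s12 le_s21; apply: uniq_perm => //.
  exact: leq_size_uniq s12 le_s21.
exact: (uniq_min_size s1_uniq s12 le_s21).2.
Qed.

Definition aprog (a d m : nat) : seq nat := [seq a + i * d | i <- iota 0 m].

Lemma ivl_aprog a n d : (0 < d)%N -> ivl a (a + n * d) d = aprog a d n.+1.
Proof. by move=> d_gt0; rewrite /ivl leq_addr addKn mulnK. Qed.

Lemma size_aprog a d m : size (aprog a d m) = m.
Proof. by rewrite size_map size_iota. Qed.

Lemma aprog_uniq a d m : (0 < d)%N -> uniq (aprog a d m).
Proof.
move=> d_gt0; rewrite map_inj_uniq ?iota_uniq // => i j /eqP.
by rewrite eqn_add2l eqn_pmul2r // => /eqP.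
Qed.

Lemma aprogP x a d m : reflect (exists2 i, (i < m)%N & x = a + i * d) (x \in aprog a d m).
Proof.
apply: (iffP mapP) => -[i]; last by exists i; rewrite ?mem_iota.
by rewrite mem_iota => /andP[_ lt_im] ->; exists i.
Qed.

Lemma target_aprog u b : (1 <= u)%N ->
  target u b = aprog 9 2 u ++ aprog 10 4 u ++ aprog (2*u+17) 2 (2*u) ++ aprog (6*u+25) 2 u
            ++ aprog b 1 u ++ aprog (b+u+8) 1 u ++ aprog (b+5*u+16) 1 u ++ aprog (b+8*u+32) 1 u.
Proof.
case: u => // n _; rewrite /target.
have -> : 2 * n.+1 + 7 = 9 + n * 2 by lia.
have -> : 4 * n.+1 + 6 = 10 + n * 4 by lia.
have -> : 6 * n.+1 + 15 = 2 * n.+1 + 17 + (2 * n).+1 * 2 by lia.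
have -> : 8 * n.+1 + 23 = 6 * n.+1 + 25 + n * 2 by lia.
have -> : b + n.+1 - 1 = b + n * 1 by lia.
have -> : b + 2 * n.+1 + 7 = b + n.+1 + 8 + n * 1 by lia.
have -> : b + 6 * n.+1 + 15 = b + 5 * n.+1 + 16 + n * 1 by lia.
have -> : b + 9 * n.+1 + 31 = b + 8 * n.+1 + 32 + n * 1 by lia.
by rewrite !ivl_aprog // [2 * n.+1]mulnS.
Qed.

Lemma size_target u b : (1 <= u)%N -> size (target u b) = 9 * u.
Proof. by move=> u_gt0; rewrite target_aprog // !size_cat !size_aprog; lia. Qed.

Lemma target_uniq u b : (1 <= u)%N -> (8 * u + 24 <= b)%N -> uniq (target u b).
Proof.
move=> u_gt0 b_ge; rewrite target_aprog //.
repeat rewrite cat_uniq aprog_uniq //=; rewrite aprog_uniq // andbT.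
repeat (apply/andP; split); apply/hasPn => x; rewrite ?mem_cat => x_in.
all: apply/aprogP => -[i lt_i x_eq]; subst x.
all: repeat case/orP: x_in => x_in; case/aprogP: x_in => j lt_j; lia.
Qed.

Lemma size_abs_entries {u} (A : 'I_u -> 'M[int]_3) : (size (abs_entries A) <= 9 * u)%N.
Proof.
rewrite /abs_entries size_filter (leq_trans (count_size _ _)) //.
by rewrite size_allpairs size_enum_ord -cardE card_prod !card_ord mulnC.
Qed.

Lemma mem_abs_entries {u} (A : 'I_u -> 'M[int]_3) k p q :
  A k p q != 0 -> absz (A k p q) \in abs_entries A.
Proof.
move=> nz; rewrite /abs_entries mem_filter absz_eq0 nz /=.
by apply/allpairsP; exists (k, (p, q)); rewrite !mem_enum.
Qed.

Section Construction.

Variables u b : nat.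

Definition entry (k p q : nat) : int :=
  match p, q with
  | 0, 0 => Posz (b + k)
  | 0, 1 => - Posz (b + 2*u + 7 - k)
  | 0, _ => Posz (2*u + 7 - 2*k)
  | 1, 0 => - Posz (b + 6*u + 15 - k)
  | 1, 1 => Posz (b + 8*u + 32 + k)
  | 1, _ => - Posz (2*u + 17 + 2*k)
  | _, 0 => Posz (6*u + 15 - 2*k)
  | _, 1 => - Posz (6*u + 25 + 2*k)
  | _, _ => Posz (4*k + 10)
  end.

Definition Amx (k : 'I_u) : 'M[int]_3 := \matrix_(p < 3, q < 3) entry k p q.

Lemma Amx_inj : injective Amx.
Proof.
move=> k1 k2 /(congr1 (fun M : 'M[int]_3 => M ord0 ord0)); rewrite !mxE /=.
by case=> /eqP; rewrite eqn_add2l => /eqP /val_inj.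
Qed.

Lemma Amx_zero_sums k : zero_sums (Amx k).
Proof.
have := ltn_ord k; split=> i; rewrite !big_ord_recr big_ord0 /= !mxE.
all: by case: i => [[|[|[|?]]] ?] //=; lia.
Qed.

Lemma mem_abs_entries_Amx {x k p q : nat} (lt_ku : (k < u)%N) (lt_p3 : (p < 3)%N)
    (lt_q3 : (q < 3)%N) :
  x = absz (entry k p q) -> (0 < x)%N -> x \in abs_entries Amx.
Proof.
move=> -> x_gt0; have := mem_abs_entries Amx (Ordinal lt_ku) (Ordinal lt_p3) (Ordinal lt_q3).
by rewrite !mxE; apply; rewrite -absz_gt0.
Qed.

Lemma target_sub_abs_entries :
  (1 <= u)%N -> (0 < b)%N -> {subset target u b <= abs_entries Amx}.
Proof.
move=> u_gt0 b_gt0; apply/allP; rewrite target_aprog // !all_cat.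
repeat (apply/andP; split); apply/allP => _ /aprogP[i lt_iu ->].
- by apply: (mem_abs_entries_Amx (k := u - 1 - i) (p := 0) (q := 2)); rewrite //=; lia.
- by apply: (mem_abs_entries_Amx (k := i) (p := 2) (q := 2)); rewrite //=; lia.
- case: (ltnP i u) => [i_lt_u|u_le_i].
    by apply: (mem_abs_entries_Amx (k := i) (p := 1) (q := 2)); rewrite //=; lia.
  by apply: (mem_abs_entries_Amx (k := u - 1 - (i - u)) (p := 2) (q := 0)); rewrite //=; lia.
- by apply: (mem_abs_entries_Amx (k := i) (p := 2) (q := 1)); rewrite //=; lia.
- by apply: (mem_abs_entries_Amx (k := i) (p := 0) (q := 0)); rewrite //=; lia.
- by apply: (mem_abs_entries_Amx (k := u - 1 - i) (p := 0) (q := 1)); rewrite //=; lia.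
- by apply: (mem_abs_entries_Amx (k := u - 1 - i) (p := 1) (q := 0)); rewrite //=; lia.
- by apply: (mem_abs_entries_Amx (k := i) (p := 1) (q := 1)); rewrite //=; lia.
Qed.

End Construction.

Theorem lemma2p2 (u b : nat) :
  (1 <= u)%N -> (8 * u + 24 <= b)%N ->
  exists A : 'I_u -> 'M[int]_3,
    injective A /\
    perm_eq (abs_entries A) (target u b) /\
    (forall k : 'I_u, zero_sums (A k)).
Proof.
move=> u_gt0 b_ge; exists (Amx u b); split; first exact: Amx_inj.
split; last exact: Amx_zero_sums.
rewrite perm_sym; apply: uniq_perm_min_size; first exact: target_uniq.
  by apply: target_sub_abs_entries => //; lia.
by rewrite size_target // size_abs_entries.
Qed.
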